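(* Let $\mathcal K$ be a 2-category, let $(V,\psi),(W,\phi),(U,\theta)$ be 1-cells $t\to t'$ and $(V',\psi'),(W',\phi')$ be 1-cells $t'\to t''$ in $\mathrm{EM}^w(\mathcal K)$, where $(t,\mu,\eta)$, $(t',\mu',\eta')$, $(t'',\mu'',\eta'')$ are monads. (1) If $\omega:V\Rightarrow W$ is $\iota$-admissible from $(V,\psi)$ to $(W,\phi)$ and $\omega':V'\Rightarrow W'$ is $\iota$-admissible from $(V',\psi')$ to $(W',\phi')$, then $(\omega't'\ast\psi'\ast\eta''V')\circ(\omega t\ast\psi\ast\eta'V)=\omega'\omega t\ast V'\psi\ast\psi'V\ast\eta''V'V$; in particular $\omega'\omega:V'V\Rightarrow W'W$ is $\iota$-admissible from $(V'V,V'\psi\ast\psi'V)$ to $(W'W,W'\phi\ast\phi'W)$. (2) If $\omega$ and $\omega'$ as in (1) are instead $\pi$-admissible, then $(\phi'\ast\eta''W'\ast\omega')\circ(\phi\ast\eta'W\ast\omega)=W'\phi\ast\phi'W\ast\eta''W'W\ast\omega'\omega$; in particular $\omega'\omega$ is $\pi$-admissible from $(V'V,V'\psi\ast\psi'V)$ to $(W'W,W'\phi\ast\phi'W)$. (3) If $\omega:V\Rightarrow W$ is $\iota$-admissible from $(V,\psi)$ to $(W,\phi)$ and $\kappa:W\Rightarrow U$ is $\iota$-admissible from $(W,\phi)$ to $(U,\theta)$, then $(\kappa t\ast\phi\ast\eta'W)\bullet(\omega t\ast\psi\ast\eta'V)=\kappa t\ast\omega t\ast\psi\ast\eta'V$;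 in particular $\kappa\ast\omega$ is $\iota$-admissible from $(V,\psi)$ to $(U,\theta)$. (4) If $\omega$ and $\kappa$ as in (3) are instead $\pi$-admissible, then $(\theta\ast\eta'U\ast\kappa)\bullet(\phi\ast\eta'W\ast\omega)=\theta\ast\eta'U\ast\kappa\ast\omega$; in particular $\kappa\ast\omega$ is $\pi$-admissible from $(V,\psi)$ to $(U,\theta)$.
   Context: Conventions in a 2-category $\mathcal K$: horizontal composition and whiskering by juxtaposition in the order of functor composition; identity 1-cell of $k$ written $k$, identity 2-cell of $V$ written $V$; vertical composition $\ast$ with $\alpha\ast\beta$ meaning $\beta$ then $\alpha$. A monad $(t,\mu,\eta)$ on $k$: $t:k\to k$, $\mu:tt\Rightarrow t$, $\eta:k\Rightarrow t$, associative and unital. The 2-category $\mathrm{EM}^w(\mathcal K)$: 0-cells are monads; a 1-cell $(t,\mu,\eta)\to(t',\mu',\eta')$ is $(V,\psi)$, $V:k\to k'$, $\psi:t'V\Rightarrow Vt$, with $V\mu\ast\psi t\ast t'\psi=\psi\ast\mu'V$; a 2-cell $(V,\psi)\Rightarrow(W,\phi)$ is $\varrho:V\Rightarrow Wt$ with $W\mu\ast\varrho t\ast\psi=W\mu\ast\phi t\ast t'\varrho$ and $\varrho=W\mu\ast\phi t\ast\eta'Wt\ast\varrho$. Horizontal composite of 1-cells $(V,\psi):t\to t'$, $(V',\psi'):t'\to t''$ is $(V'V,V'\psi\ast\psi'V)$; of 2-cells $\varrho:(V,\psi)\Rightarrow(W,\phi)$, $\varrho':(V',\psi')\Rightarrow(W',\phi')$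 is $\varrho'\circ\varrho=W'W\mu\ast W'\varrho t\ast W'\psi\ast\varrho'V$; vertical composite of $\varrho:(V,\psi)\Rightarrow(W,\phi)$, $\tau:(W,\phi)\Rightarrow(U,\theta)$ is $\tau\bullet\varrho=U\mu\ast\tau t\ast\varrho$. For 1-cells $(V,\psi),(W,\phi):t\to t'$ in $\mathrm{EM}^w(\mathcal K)$, a 2-cell $\omega:V\Rightarrow W$ of $\mathcal K$ is called $\iota$-admissible (from $(V,\psi)$ to $(W,\phi)$) if $\omega t\ast\psi=W\mu\ast\phi t\ast t'\omega t\ast t'\psi\ast t'\eta'V$ (equivalently, $\omega t\ast\psi\ast\eta'V$ is a 2-cell $(V,\psi)\Rightarrow(W,\phi)$ in $\mathrm{EM}^w(\mathcal K)$), and $\pi$-admissible if $\phi\ast t'\omega=W\mu\ast\phi t\ast\eta'Wt\ast\omega t\ast\psi$ (equivalently, $\phi\ast\eta'W\ast\omega$ is a 2-cell $(V,\psi)\Rightarrow(W,\phi)$ in $\mathrm{EM}^w(\mathcal K)$). *)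

(* Plain Rocq: a strict 2-category (Cat-enriched category) presented with
   total composition operations on 2-cells, each 2-cell carrying its source
   and target 1-cell; the axioms are stated under the usual composability
   conditions.  Composites of non-composable 2-cells are unconstrained junk
   and never occur in the statement. *)

Set Implicit Arguments.
Unset Strict Implicit.

Record TwoCat := {
  ob : Type;
  hom : ob -> ob -> Type;
  cell : ob -> ob -> Type;
  id1 : forall a, hom a a;
  comp1 : forall a b c, hom b c -> hom a b -> hom a c;
  src : forall a b, cell a b -> hom a b;
  tgt : forall a b, cell a b -> hom a b;
  id2 : forall a b, hom a b -> cell a b;
  vcomp : forall a b, cell a b -> cell a b -> cell a b;  (* vcomp al be = al * be : be then al *)
  hcomp : forall a b c, cell b c -> cell a b -> cell a c;
  comp1A : forall a b c d (h : hom c d) (g : hom b c) (f : hom a b),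
      comp1 h (comp1 g f) = comp1 (comp1 h g) f;
  comp1_id1l : forall a b (f : hom a b), comp1 (id1 b) f = f;
  comp1_id1r : forall a b (f : hom a b), comp1 f (id1 a) = f;
  src_id2 : forall a b (f : hom a b), src (id2 f) = f;
  tgt_id2 : forall a b (f : hom a b), tgt (id2 f) = f;
  src_vcomp : forall a b (al be : cell a b), tgt be = src al ->
      src (vcomp al be) = src be;
  tgt_vcomp : forall a b (al be : cell a b), tgt be = src al ->
      tgt (vcomp al be) = tgt al;
  vcompA : forall a b (al be ga : cell a b), tgt ga = src be -> tgt be = src al ->
      vcomp al (vcomp be ga) = vcomp (vcomp al be) ga;
  vcomp_id2l : forall a b (al : cell a b), vcomp (id2 (tgt al)) al = al;
  vcomp_id2r : forall a b (al : cell a b), vcomp al (id2 (src al)) = al;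
  src_hcomp : forall a b c (al : cell b c) (be : cell a b),
      src (hcomp al be) = comp1 (src al) (src be);
  tgt_hcomp : forall a b c (al : cell b c) (be : cell a b),
      tgt (hcomp al be) = comp1 (tgt al) (tgt be);
  hcomp_id2 : forall a b c (g : hom b c) (f : hom a b),
      hcomp (id2 g) (id2 f) = id2 (comp1 g f);
  interchange : forall a b c (al be : cell b c) (al' be' : cell a b),
      tgt be = src al -> tgt be' = src al' ->
      hcomp (vcomp al be) (vcomp al' be') = vcomp (hcomp al al') (hcomp be be');
  hcompA : forall a b c d (al : cell c d) (be : cell b c) (ga : cell a b),
      hcomp al (hcomp be ga) = hcomp (hcomp al be) ga;
  hcomp_id1l : forall a b (al : cell a b), hcomp (id2 (id1 b)) al = al;
  hcomp_id1r : forall a b (al : cell a b), hcomp al (id2 (id1 a)) = al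
}.

Arguments hom : clear implicits.
Arguments cell : clear implicits.
Arguments id1 {_} a.
Arguments comp1 {_ a b c} g f.
Arguments src {_ a b} al.
Arguments tgt {_ a b} al.
Arguments id2 {_ a b} f.
Arguments vcomp {_ a b} al be.
Arguments hcomp {_ a b c} al be.

(* whiskering: wl V al = "V al",  wr al V = "al V" *)
Definition wl (K : TwoCat) (a b c : ob K) (V : hom K b c) (al : cell K a b) : cell K a c :=
  hcomp (id2 V) al.
Definition wr (K : TwoCat) (a b c : ob K) (al : cell K b c) (V : hom K a b) : cell K a c :=
  hcomp al (id2 V).
Arguments wl {K a b c} V al.
Arguments wr {K a b c} al V.

Notation "al ** be" := (vcomp al be) (at level 45, right associativity).

Record monad (K : TwoCat) := {
  mk : ob K;
  mt : hom K mk mk;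
  mmu : cell K mk mk;
  meta : cell K mk mk;
  src_mmu : src mmu = comp1 mt mt;
  tgt_mmu : tgt mmu = mt;
  src_meta : src meta = id1 mk;
  tgt_meta : tgt meta = mt;
  mmu_assoc : mmu ** wl mt mmu = mmu ** wr mmu mt;
  mmu_unitl : mmu ** wr meta mt = id2 mt;
  mmu_unitr : mmu ** wl mt meta = id2 mt
}.
Arguments mk {K} m.
Arguments mt {K} m.
Arguments mmu {K} m.
Arguments meta {K} m.

Section EM.
Variable K : TwoCat.

Definition em1 (t t' : monad K) (V : hom K (mk t) (mk t')) (psi : cell K (mk t) (mk t')) : Prop :=
  src psi = comp1 (mt t') V /\ tgt psi = comp1 V (mt t) /\
  wl V (mmu t) ** wr psi (mt t) ** wl (mt t') psi = psi ** wr (mmu t') V.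

Definition em2 (t t' : monad K) (V : hom K (mk t) (mk t')) (psi : cell K (mk t) (mk t'))
  (W : hom K (mk t) (mk t')) (phi : cell K (mk t) (mk t')) (rho : cell K (mk t) (mk t')) : Prop :=
  src rho = V /\ tgt rho = comp1 W (mt t) /\
  wl W (mmu t) ** wr rho (mt t) ** psi = wl W (mmu t) ** wr phi (mt t) ** wl (mt t') rho /\
  rho = wl W (mmu t) ** wr phi (mt t) ** wr (meta t') (comp1 W (mt t)) ** rho.

(* horizontal composite rho' o rho of rho : (V,psi) => (W,phi) (t -> t')
   and rho' : (V',psi') => (W',phi') (t' -> t'') *)
Definition emh (t : monad K) (k' k'' : ob K) (V W : hom K (mk t) k') (psi : cell K (mk t) k')
  (W' : hom K k' k'') (rho' : cell K k' k'') (rho : cell K (mk t) k') : cell K (mk t) k'' :=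
  wl (comp1 W' W) (mmu t) ** wl W' (wr rho (mt t)) ** wl W' psi ** wr rho' V.

(* vertical composite tau . rho, with tau : (W,phi) => (U,theta) *)
Definition emv (t : monad K) (k' : ob K) (U : hom K (mk t) k')
  (tau rho : cell K (mk t) k') : cell K (mk t) k' :=
  wl U (mmu t) ** wr tau (mt t) ** rho.

Definition iadm (t t' : monad K) (V : hom K (mk t) (mk t')) (psi : cell K (mk t) (mk t'))
  (W : hom K (mk t) (mk t')) (phi : cell K (mk t) (mk t')) (om : cell K (mk t) (mk t')) : Prop :=
  src om = V /\ tgt om = W /\
  wr om (mt t) ** psi =
  wl W (mmu t) ** wr phi (mt t) ** wl (mt t') (wr om (mt t)) ** wl (mt t') psi
    ** wl (mt t') (wr (meta t') V).

Definition padm (t t' : monad K) (V : hom K (mk t) (mk t')) (psi : cell K (mk t) (mk t'))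
  (W : hom K (mk t) (mk t')) (phi : cell K (mk t) (mk t')) (om : cell K (mk t) (mk t')) : Prop :=
  src om = V /\ tgt om = W /\
  phi ** wl (mt t') om =
  wl W (mmu t) ** wr phi (mt t) ** wr (meta t') (comp1 W (mt t)) ** wr om (mt t) ** psi.

End EM.
Arguments em1 {K} t t' V psi.
Arguments em2 {K} t t' V psi W phi rho.
Arguments emh {K} t {k' k''} V W psi W' rho' rho.
Arguments emv {K} t {k'} U tau rho.
Arguments iadm {K} t t' V psi W phi om.
Arguments padm {K} t t' V psi W phi om.

(* Each identity is a pasting computation: after whiskering, both sides are
   strings of vertical composites of whiskered generating 2-cells, and one is
   turned into the other by interchange, the monad laws, the compatibility of
   psi with mu', and the admissibility equations.  Two auxiliary facts carry
   the argument: for iota-admissible om, the cell om t * psi * eta' V absorbs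
   W mu * phi t * eta' W t (it satisfies the unit condition of an EM-2-cell),
   and both kinds of admissibility persist after inserting mu' on the right of
   om t * psi, resp. phi * t' om. *)

From Stdlib Require Import Setoid.
Set Implicit Arguments.

Section Whiskering.
Context {K : TwoCat}.

Lemma src_wl a b c (X : hom K b c) (x : cell K a b) : src (wl X x) = comp1 X (src x).
Proof. unfold wl; rewrite src_hcomp, src_id2; reflexivity. Qed.

Lemma tgt_wl a b c (X : hom K b c) (x : cell K a b) : tgt (wl X x) = comp1 X (tgt x).
Proof. unfold wl; rewrite tgt_hcomp, tgt_id2; reflexivity. Qed.

Lemma src_wr a b c (x : cell K b c) (X : hom K a b) : src (wr x X) = comp1 (src x) X.
Proof. unfold wr; rewrite src_hcomp, src_id2; reflexivity. Qed.

Lemma tgt_wr a b c (x : cell K b c) (X : hom K a b) : tgt (wr x X) = comp1 (tgt x) X.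
Proof. unfold wr; rewrite tgt_hcomp, tgt_id2; reflexivity. Qed.

Lemma wl_comp1 a b c d (X : hom K c d) (Y : hom K b c) (x : cell K a b) :
  wl X (wl Y x) = wl (comp1 X Y) x.
Proof. unfold wl; rewrite hcompA, hcomp_id2; reflexivity. Qed.

Lemma wr_comp1 a b c d (x : cell K c d) (X : hom K b c) (Y : hom K a b) :
  wr (wr x X) Y = wr x (comp1 X Y).
Proof. unfold wr; rewrite <- hcompA, hcomp_id2; reflexivity. Qed.

Lemma wl_wrA a b c d (X : hom K c d) (x : cell K b c) (Y : hom K a b) :
  wl X (wr x Y) = wr (wl X x) Y.
Proof. unfold wl, wr; rewrite hcompA; reflexivity. Qed.

Lemma wl_id2 a b c (X : hom K b c) (f : hom K a b) : wl X (id2 f) = id2 (comp1 X f).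
Proof. unfold wl; rewrite hcomp_id2; reflexivity. Qed.

Lemma wr_id2 a b c (f : hom K b c) (X : hom K a b) : wr (id2 f) X = id2 (comp1 f X).
Proof. unfold wr; rewrite hcomp_id2; reflexivity. Qed.

Lemma wl_id1 a b (x : cell K a b) : wl (id1 b) x = x.
Proof. unfold wl; apply hcomp_id1l. Qed.

Lemma wr_id1 a b (x : cell K a b) : wr x (id1 a) = x.
Proof. unfold wr; apply hcomp_id1r. Qed.

Lemma vcomp_id2l_tgt a b (f : hom K a b) (x : cell K a b) : tgt x = f -> id2 f ** x = x.
Proof. intros <-; apply vcomp_id2l. Qed.

Lemma vcomp_id2r_src a b (f : hom K a b) (x : cell K a b) : src x = f -> x ** id2 f = x.
Proof. intros <-; apply vcomp_id2r. Qed.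

Lemma vcomp_id2_id2 {a b} (f : hom K a b) : id2 f ** id2 f = id2 f.
Proof. apply vcomp_id2l_tgt, tgt_id2. Qed.

Lemma wl_vcomp a b c (X : hom K b c) (x y : cell K a b) : tgt y = src x ->
  wl X (x ** y) = wl X x ** wl X y.
Proof.
  intro Hxy; unfold wl; rewrite <- (vcomp_id2_id2 X) at 1.
  rewrite interchange; [reflexivity | rewrite tgt_id2, src_id2; reflexivity | exact Hxy].
Qed.

Lemma wr_vcomp a b c (x y : cell K b c) (X : hom K a b) : tgt y = src x ->
  wr (x ** y) X = wr x X ** wr y X.
Proof.
  intro Hxy; unfold wr; rewrite <- (vcomp_id2_id2 X) at 1.
  rewrite interchange; [reflexivity | exact Hxy | rewrite tgt_id2, src_id2; reflexivity].
Qed.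

Lemma hcomp_wl_wr {a b c} (x : cell K b c) (y : cell K a b) :
  hcomp x y = wl (tgt x) y ** wr x (src y).
Proof.
  unfold wl, wr; rewrite <- (vcomp_id2l x) at 1; rewrite <- (vcomp_id2r y) at 1.
  rewrite interchange; [reflexivity | rewrite src_id2; reflexivity | rewrite tgt_id2; reflexivity].
Qed.

Lemma hcomp_wr_wl {a b c} (x : cell K b c) (y : cell K a b) :
  hcomp x y = wr x (tgt y) ** wl (src x) y.
Proof.
  unfold wl, wr; rewrite <- (vcomp_id2r x) at 1; rewrite <- (vcomp_id2l y) at 1.
  rewrite interchange; [reflexivity | rewrite tgt_id2; reflexivity | rewrite src_id2; reflexivity].
Qed.

Lemma whisker_exchange {a b c} (x : cell K b c) (y : cell K a b) :
  wl (tgt x) y ** wr x (src y) = wr x (tgt y) ** wl (src x) y.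
Proof. rewrite <- hcomp_wl_wr, <- hcomp_wr_wl; reflexivity. Qed.

End Whiskering.

(* [solve_types] discharges the source/target side conditions of the
   vertical-composition axioms.  [normalize] brings a 2-cell to normal form:
   a right-nested vertical composite of whiskerings of generating cells, with
   right-nested 1-cell composites and identities removed. *)
Ltac comp1_step := first [ rewrite <- comp1A | rewrite comp1_id1l | rewrite comp1_id1r ].

Ltac type_step := first [
   rewrite src_wl | rewrite tgt_wl | rewrite src_wr | rewrite tgt_wr
 | rewrite src_hcomp | rewrite tgt_hcomp | rewrite src_id2 | rewrite tgt_id2
 | rewrite src_mmu | rewrite tgt_mmu | rewrite src_meta | rewrite tgt_meta
 | match goal with H : src ?x = _ |- context [src ?x] => rewrite H
                 | H : tgt ?x = _ |- context [tgt ?x] => rewrite H end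
 | rewrite src_vcomp by solve_types | rewrite tgt_vcomp by solve_types
 | comp1_step ]
with solve_types := repeat type_step; reflexivity.

Ltac normalize_step := first [
   rewrite wl_comp1 | rewrite wr_comp1 | rewrite wl_wrA | rewrite wl_id2 | rewrite wr_id2
 | rewrite wl_id1 | rewrite wr_id1 | comp1_step
 | rewrite wl_vcomp by solve_types | rewrite wr_vcomp by solve_types
 | rewrite <- vcompA by solve_types
 | rewrite vcomp_id2l_tgt by solve_types | rewrite vcomp_id2r_src by solve_types ].

Ltac normalize := repeat (first [type_step | normalize_step]).

Ltac vappend L Y :=
  lazymatch L with vcomp ?a ?b => let r := vappend b Y in constr:(vcomp a r)
                 | _ => constr:(vcomp L Y) end.
Ltac vlength L := lazymatch L with vcomp _ ?b => let n := vlength b in constr:(S n) | _ => constr:(O) end.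
Ltac vdrop n c := lazymatch n with O => c | S ?m => lazymatch c with vcomp _ ?b => vdrop m b end end.
Ltac vhead L := lazymatch L with vcomp ?a _ => a | _ => L end.

(* Rewrites with [L = R] where [L] occurs as a consecutive segment [L ** Y] of
   a right-nested composite in the goal, which is not a subterm syntactically. *)
Ltac rewrite_segment E :=
  lazymatch type of E with ?L = ?R =>
   let h := vhead L in let n := vlength L in
   first [
    match goal with |- context [vcomp h ?rest] =>
      let Y := vdrop n rest in
      let l := vappend L Y in let r := vappend R Y in
      let HE := fresh in
      assert (HE : l = r) by (transitivity (vcomp L Y);
        [ repeat (rewrite <- vcompA by solve_types); reflexivity
        | rewrite E; repeat (rewrite <- vcompA by solve_types); reflexivity ]);
      rewrite HE; clear HE
    end
   | rewrite E ]
  end.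

Ltac rw e := let E := fresh "E" in
  pose proof e as E; cbv beta in E; revert E; normalize; intro E;
  rewrite_segment E; clear E; normalize.
Ltac rwb e := rw (eq_sym e).

Section AdmissibleCells.
Context {K : TwoCat} (t t' : monad K) (V W : hom K (mk t) (mk t'))
  (psi phi om : cell K (mk t) (mk t')).
Hypotheses (HV : em1 t t' V psi) (HW : em1 t t' W phi).

Lemma iota_cell_mu_psi (Hos : src om = V) (Hot : tgt om = W) :
  wl W (mmu t) ** wr (wr om (mt t) ** psi ** wr (meta t') V) (mt t) ** psi = wr om (mt t) ** psi.
Proof.
  destruct HV as [HsV [HtV HaxV]]; normalize.
  rwb (whisker_exchange (meta t') psi).
  rw (whisker_exchange om (mmu t)).
  rw HaxV.
  rw (f_equal (fun c => wr c V) (mmu_unitl t')).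
  reflexivity.
Qed.

Lemma iadm_iota_cell_unital : iadm t t' V psi W phi om ->
  wl W (mmu t) ** wr phi (mt t) ** wr (meta t') (comp1 W (mt t))
    ** wr om (mt t) ** psi ** wr (meta t') V
  = wr om (mt t) ** psi ** wr (meta t') V.
Proof.
  destruct HV as [HsV [HtV _]]; destruct HW as [HsW [HtW _]].
  intros [Hos [Hot Hi]]; normalize.
  rwb (whisker_exchange (meta t') (wr om (mt t))).
  rwb (whisker_exchange (meta t') psi).
  rwb (whisker_exchange (meta t') (wr (meta t') V)).
  rwb Hi.
  reflexivity.
Qed.

Lemma iadm_mu' : iadm t t' V psi W phi om ->
  wr om (mt t) ** psi ** wr (mmu t') V
  = wl W (mmu t) ** wr phi (mt t) ** wl (mt t') (wr om (mt t)) ** wl (mt t') psi.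
Proof.
  intros [Hos [Hot Hi]].
  pose proof (iota_cell_mu_psi Hos Hot) as Hmu.
  destruct HV as [HsV [HtV HaxV]]; destruct HW as [HsW [HtW _]]; normalize.
  rwb HaxV.
  rwb (whisker_exchange om (mmu t)).
  rw (f_equal (fun c => wr c (mt t)) Hi).
  rwb (f_equal (wl W) (mmu_assoc t)).
  rw (whisker_exchange phi (mmu t)).
  rw (f_equal (wl (mt t')) Hmu).
  reflexivity.
Qed.

Lemma padm_mu' : padm t t' V psi W phi om ->
  wl W (mmu t) ** wr phi (mt t) ** wl (mt t') (wr om (mt t)) ** wl (mt t') psi
  = phi ** wl (mt t') om ** wr (mmu t') V.
Proof.
  destruct HV as [HsV [HtV _]]; destruct HW as [HsW [HtW HaxW]].
  intros [Hos [Hot Hp]]; normalize.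
  rw (whisker_exchange (mmu t') om).
  rwb HaxW.
  rw (f_equal (wl (mt t')) Hp).
  rwb (whisker_exchange phi (mmu t)).
  rw (f_equal (wl W) (mmu_assoc t)).
  rw (f_equal (fun c => wr c (mt t)) HaxW).
  rw (f_equal (fun c => wr c (comp1 W (mt t))) (mmu_unitr t')).
  reflexivity.
Qed.

End AdmissibleCells.

Section HorizontalComposite.
Context {K : TwoCat} (t t' t'' : monad K) (V W : hom K (mk t) (mk t'))
  (psi phi om : cell K (mk t) (mk t')) (V' W' : hom K (mk t') (mk t''))
  (psi' phi' om' : cell K (mk t') (mk t'')).
Hypotheses (HV : em1 t t' V psi) (HW : em1 t t' W phi)
  (HV' : em1 t' t'' V' psi') (HW' : em1 t' t'' W' phi').

Lemma iadm_emh_iota_cell : iadm t t' V psi W phi om -> iadm t' t'' V' psi' W' phi' om' ->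
  emh t V W psi W'
    (wr om' (mt t') ** psi' ** wr (meta t'') V')
    (wr om (mt t) ** psi ** wr (meta t') V)
  = wr (hcomp om' om) (mt t) ** wl V' psi ** wr psi' V ** wr (meta t'') (comp1 V' V).
Proof.
  intros [Hos [Hot _]] [Hos' [Hot' _]].
  pose proof (iota_cell_mu_psi om HV Hos Hot) as Hmu.
  destruct HV as [HsV [HtV _]]; destruct HV' as [HsV' [HtV' _]].
  unfold emh; rewrite (hcomp_wr_wl om' om); normalize.
  rw (f_equal (wl W') Hmu).
  rw (whisker_exchange om' psi).
  rw (whisker_exchange om' (wr om (mt t))).
  reflexivity.
Qed.

Lemma iadm_hcomp : iadm t t' V psi W phi om -> iadm t' t'' V' psi' W' phi' om' ->
  iadm t t'' (comp1 V' V) (wl V' psi ** wr psi' V)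
             (comp1 W' W) (wl W' phi ** wr phi' W) (hcomp om' om).
Proof.
  intros Hom [Hos' [Hot' Hi']].
  pose proof (iadm_mu' HV HW Hom) as Hmu'.
  destruct Hom as [Hos [Hot _]].
  destruct HV as [HsV [HtV _]]; destruct HW as [HsW [HtW _]].
  destruct HV' as [HsV' [HtV' _]]; destruct HW' as [HsW' [HtW' _]].
  split; [solve_types | split; [solve_types |]].
  rewrite (hcomp_wl_wr om' om); normalize.
  rwb (whisker_exchange om' psi).
  rw (f_equal (fun c => wr c V) Hi').
  rw (f_equal (wl W') Hmu').
  rwb (whisker_exchange phi' (wr om (mt t))).
  rwb (whisker_exchange (wl (mt t'') om') psi).
  rwb (whisker_exchange phi' psi).
  reflexivity.
Qed.

Lemma padm_emh_pi_cell : padm t t' V psi W phi om -> padm t' t'' V' psi' W' phi' om' ->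
  emh t V W psi W'
    (phi' ** wr (meta t'') W' ** om')
    (phi ** wr (meta t') W ** om)
  = wl W' phi ** wr phi' W ** wr (meta t'') (comp1 W' W) ** hcomp om' om.
Proof.
  intros [Hos [Hot Hp]] [Hos' [Hot' _]].
  destruct HV as [HsV [HtV _]]; destruct HW as [HsW [HtW _]].
  destruct HW' as [HsW' [HtW' _]].
  unfold emh; rewrite (hcomp_wl_wr om' om); normalize.
  rwb (f_equal (wl W') Hp).
  rw (whisker_exchange phi' om).
  rw (whisker_exchange (meta t'') (wl W' om)).
  reflexivity.
Qed.

Lemma padm_hcomp : padm t t' V psi W phi om -> padm t' t'' V' psi' W' phi' om' ->
  padm t t'' (comp1 V' V) (wl V' psi ** wr psi' V)
             (comp1 W' W) (wl W' phi ** wr phi' W) (hcomp om' om).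
Proof.
  intros Hom [Hos' [Hot' Hp']].
  pose proof (padm_mu' HV HW Hom) as Hmu'.
  destruct Hom as [Hos [Hot _]].
  destruct HV as [HsV [HtV _]]; destruct HW as [HsW [HtW _]].
  destruct HV' as [HsV' [HtV' _]]; destruct HW' as [HsW' [HtW' _]].
  split; [solve_types | split; [solve_types |]].
  rewrite (hcomp_wr_wl om' om); normalize.
  rwb (whisker_exchange om' (wr om (mt t))).
  rwb (whisker_exchange om' psi).
  rwb (whisker_exchange (meta t'') (wr (wl W' om) (mt t))).
  rwb (whisker_exchange (meta t'') (wl W' psi)).
  rwb (whisker_exchange phi' (wr om (mt t))).
  rwb (whisker_exchange phi' psi).
  rw (f_equal (wl W') Hmu').
  rwb (f_equal (fun c => wr c V) Hp').
  rw (whisker_exchange phi' om).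
  rw (whisker_exchange (wl (mt t'') om') om).
  reflexivity.
Qed.

End HorizontalComposite.

Section VerticalComposite.
Context {K : TwoCat} (t t' : monad K) (V W U : hom K (mk t) (mk t'))
  (psi phi theta om kap : cell K (mk t) (mk t')).
Hypotheses (HV : em1 t t' V psi) (HW : em1 t t' W phi) (HU : em1 t t' U theta).

Lemma iadm_emv_iota_cell : iadm t t' V psi W phi om -> iadm t t' W phi U theta kap ->
  emv t U (wr kap (mt t) ** phi ** wr (meta t') W)
          (wr om (mt t) ** psi ** wr (meta t') V)
  = wr kap (mt t) ** wr om (mt t) ** psi ** wr (meta t') V.
Proof.
  intros Hom [Hks [Hkt _]].
  pose proof (iadm_iota_cell_unital HV HW Hom) as Hunit.
  destruct Hom as [Hos [Hot _]].
  destruct HV as [HsV [HtV _]]; destruct HW as [HsW [HtW _]].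
  unfold emv; normalize.
  rw (whisker_exchange kap (mmu t)).
  rw Hunit.
  reflexivity.
Qed.

Lemma iadm_vcomp : iadm t t' V psi W phi om -> iadm t t' W phi U theta kap ->
  iadm t t' V psi U theta (kap ** om).
Proof.
  intros Hom [Hks [Hkt Hk]].
  pose proof (iadm_iota_cell_unital HV HW Hom) as Hunit.
  destruct Hom as [Hos [Hot Hi]].
  destruct HV as [HsV [HtV _]]; destruct HW as [HsW [HtW _]];
    destruct HU as [HsU [HtU _]].
  split; [solve_types | split; [solve_types |]]; normalize.
  rw Hi.
  rwb (whisker_exchange kap (mmu t)).
  rw (f_equal (fun c => wr c (mt t)) Hk).
  rwb (f_equal (wl U) (mmu_assoc t)).
  rw (whisker_exchange theta (mmu t)).
  rw (whisker_exchange (wl (mt t') kap) (mmu t)).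
  rw (f_equal (wl (mt t')) Hunit).
  reflexivity.
Qed.

Lemma padm_emv_pi_cell : padm t t' V psi W phi om -> padm t t' W phi U theta kap ->
  emv t U (theta ** wr (meta t') U ** kap)
          (phi ** wr (meta t') W ** om)
  = theta ** wr (meta t') U ** kap ** om.
Proof.
  intros [Hos [Hot _]] [Hks [Hkt Hk]].
  destruct HW as [HsW [HtW _]]; destruct HU as [HsU [HtU _]].
  unfold emv; normalize.
  rwb Hk.
  rw (whisker_exchange (meta t') kap).
  reflexivity.
Qed.

Lemma padm_vcomp : padm t t' V psi W phi om -> padm t t' W phi U theta kap ->
  padm t t' V psi U theta (kap ** om).
Proof.
  intros [Hos [Hot Hp]] [Hks [Hkt Hk]].
  destruct HV as [HsV [HtV _]]; destruct HW as [HsW [HtW _]];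
    destruct HU as [HsU [HtU _]].
  split; [solve_types | split; [solve_types |]]; normalize.
  rw Hk.
  rw Hp.
  rwb (whisker_exchange kap (mmu t)).
  rwb (whisker_exchange (meta t') (wl U (mmu t))).
  rwb (whisker_exchange theta (mmu t)).
  rw (f_equal (wl U) (mmu_assoc t)).
  rwb (f_equal (fun c => wr c (mt t)) Hk).
  rw (whisker_exchange (meta t') (wr kap (mt t))).
  reflexivity.
Qed.

End VerticalComposite.

Theorem lemma1p3 (K : TwoCat) (t t' t'' : monad K)
  (V W U : hom K (mk t) (mk t')) (psi phi theta : cell K (mk t) (mk t'))
  (V' W' : hom K (mk t') (mk t'')) (psi' phi' : cell K (mk t') (mk t''))
  (om kap : cell K (mk t) (mk t')) (om' : cell K (mk t') (mk t'')) :
  em1 t t' V psi -> em1 t t' W phi -> em1 t t' U theta ->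
  em1 t' t'' V' psi' -> em1 t' t'' W' phi' ->
  (* (1) *)
  (iadm t t' V psi W phi om -> iadm t' t'' V' psi' W' phi' om' ->
     emh t V W psi W'
       (wr om' (mt t') ** psi' ** wr (meta t'') V')
       (wr om (mt t) ** psi ** wr (meta t') V)
     = wr (hcomp om' om) (mt t) ** wl V' psi ** wr psi' V ** wr (meta t'') (comp1 V' V)
   /\ iadm t t'' (comp1 V' V) (wl V' psi ** wr psi' V)
                 (comp1 W' W) (wl W' phi ** wr phi' W) (hcomp om' om)) /\
  (* (2) *)
  (padm t t' V psi W phi om -> padm t' t'' V' psi' W' phi' om' ->
     emh t V W psi W'
       (phi' ** wr (meta t'') W' ** om')
       (phi ** wr (meta t') W ** om)
     = wl W' phi ** wr phi' W ** wr (meta t'') (comp1 W' W) ** hcomp om' om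
   /\ padm t t'' (comp1 V' V) (wl V' psi ** wr psi' V)
                 (comp1 W' W) (wl W' phi ** wr phi' W) (hcomp om' om)) /\
  (* (3) *)
  (iadm t t' V psi W phi om -> iadm t t' W phi U theta kap ->
     emv t U (wr kap (mt t) ** phi ** wr (meta t') W)
             (wr om (mt t) ** psi ** wr (meta t') V)
     = wr kap (mt t) ** wr om (mt t) ** psi ** wr (meta t') V
   /\ iadm t t' V psi U theta (kap ** om)) /\
  (* (4) *)
  (padm t t' V psi W phi om -> padm t t' W phi U theta kap ->
     emv t U (theta ** wr (meta t') U ** kap)
             (phi ** wr (meta t') W ** om)
     = theta ** wr (meta t') U ** kap ** om
   /\ padm t t' V psi U theta (kap ** om)).
Proof.
  intros HV HW HU HV' HW'.
  split; [| split; [| split]]; intros Hom Hom'; split.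
  - exact (iadm_emh_iota_cell HV HV' Hom Hom').
  - exact (iadm_hcomp HV HW HV' HW' Hom Hom').
  - exact (padm_emh_pi_cell HV HW HW' Hom Hom').
  - exact (padm_hcomp HV HW HV' HW' Hom Hom').
  - exact (iadm_emv_iota_cell HV HW Hom Hom').
  - exact (iadm_vcomp HV HW HU Hom Hom').
  - exact (padm_emv_pi_cell HW HU Hom Hom').
  - exact (padm_vcomp HV HW HU Hom Hom').
Qed.
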